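(* Let $F\subseteq\omega$ be a $\Pi^1_1$ set. Then there exists a computable function $g$ such that for every $p\in\omega$, $g(p)$ is an $\iota$-index of a c.e. effective quasi-Polish space $X=\iota(g(p))$ such that $X$ is metrizable if $p\in F$, and $X$ is not $T_1$ if $p\notin F$.
   Context: Let $(W_n)$ be a standard numbering of c.e. subsets of $\omega$, $V_n=\{(i,j)\mid\langle i,j\rangle\in W_n\}$, and $t$ a computable function with $V_{t(n)}$ the transitive closure of $V_n$. For a transitive relation $\prec$ on $\omega$, an ideal is a non-empty lower, directed subset of $\omega$; $\mathcal{I}(\prec)$ is the space of ideals with topology generated by $[k]_\prec=\{I\mid k\in I\}$, an effective space with basic opens numbered by $k$. The numbering $\iota$ is defined by $\iota(n)=\mathcal{I}(V_{t(n)})$; an $\iota$-index of $X$ is an $n$ with $X=\iota(n)$. Every $\iota(n)$ is an effective quasi-Polish space; it is c.e. (overt) if $\{k\mid[k]_{V_{t(n)}}\neq\emptyset\}$ is c.e. *)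

From Stdlib Require Import Reals Relations List Lia.
Open Scope R_scope.

Definition pair (a b : nat) : nat := (((a + b) * (a + b + 1)) / 2 + b)%nat.

Inductive code : Type :=
| cZero : code
| cSucc : code
| cLeft : code
| cRight : code
| cPair : code -> code -> code
| cComp : code -> code -> code
| cPrec : code -> code -> code
| cMu : code -> code.

Inductive eval : code -> nat -> nat -> Prop :=
| ev_zero x : eval cZero x 0
| ev_succ x : eval cSucc x (S x)
| ev_left a b : eval cLeft (pair a b) a
| ev_right a b : eval cRight (pair a b) b
| ev_pair f g x a b : eval f x a -> eval g x b -> eval (cPair f g) x (pair a b)
| ev_comp f g x y z : eval g x y -> eval f y z -> eval (cComp f g) x z
| ev_prec0 f g a y : eval f a y -> eval (cPrec f g) (pair a 0) y
| ev_precS f g a n i z :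
    eval (cPrec f g) (pair a n) i -> eval g (pair a (pair n i)) z ->
    eval (cPrec f g) (pair a (S n)) z
| ev_mu f x n (m : nat -> nat) :
    eval f (pair x n) 0 ->
    (forall i, (i < n)%nat -> eval f (pair x i) (S (m i))) ->
    eval (cMu f) x n.

(* Goedel numbering of codes (injective); indices outside the range
   denote the nowhere-defined function. *)
Fixpoint encode (c : code) : nat :=
  match c with
  | cZero => 0 | cSucc => 1 | cLeft => 2 | cRight => 3
  | cPair f g => 4 * pair (encode f) (encode g) + 4
  | cComp f g => 4 * pair (encode f) (encode g) + 5
  | cPrec f g => 4 * pair (encode f) (encode g) + 6
  | cMu f => 4 * encode f + 7
  end%nat.

Definition phi (e x y : nat) : Prop := exists c, encode c = e /\ eval c x y.

Definition W (n : nat) (x : nat) : Prop := exists y, phi n x y.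

Definition computable_fun (g : nat -> nat) : Prop :=
  exists e, forall x, phi e x (g x).

Definition ce_set (A : nat -> Prop) : Prop :=
  exists e, forall x, A x <-> W e x.

Definition computable_pred (R : nat -> Prop) : Prop :=
  exists e, forall x, (R x -> phi e x 0) /\ (~ R x -> phi e x 1).

Fixpoint init_code (f : nat -> nat) (n : nat) : nat :=
  match n with
  | O => O
  | S k => S (pair (f k) (init_code f k))
  end.

(* Lightface Pi^1_1 (Kleene normal form):
   p in F  <->  forall f in Baire space, exists n, R(<p, code(f|n)>),
   with R computable. *)
Definition Pi11 (F : nat -> Prop) : Prop :=
  exists R : nat -> Prop, computable_pred R /\
    forall p, F p <-> forall f : nat -> nat, exists n, R (pair p (init_code f n)).

Definition V (n : nat) (i j : nat) : Prop := W n (pair i j).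

(* V_{t(n)} = transitive closure of V_n *)
Definition iota_rel (n : nat) : relation nat := clos_trans nat (V n).

Definition is_ideal (R : relation nat) (I : nat -> Prop) : Prop :=
  (exists k, I k) /\
  (forall a b, I b -> R a b -> I a) /\
  (forall a b, I a -> I b -> exists c, I c /\ R a c /\ R b c).

Definition ideal (R : relation nat) : Type := {I : nat -> Prop | is_ideal R I}.

Definition basic (R : relation nat) (k : nat) (x : ideal R) : Prop := proj1_sig x k.

(* topology generated by the sets [k]_R: unions of finite intersections *)
Definition is_open (R : relation nat) (U : ideal R -> Prop) : Prop :=
  forall x, U x -> exists ks : list nat,
    (forall k, In k ks -> basic R k x) /\
    (forall y, (forall k, In k ks -> basic R k y) -> U y).

Definition T1 (R : relation nat) : Prop :=
  forall x y : ideal R, x <> y ->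
    exists U, is_open R U /\ U x /\ ~ U y.

Definition is_metric {X : Type} (d : X -> X -> R) : Prop :=
  (forall x y, 0 <= d x y) /\
  (forall x y, d x y = 0 <-> x = y) /\
  (forall x y, d x y = d y x) /\
  (forall x y z, d x z <= d x y + d y z).

Definition metrizable (Rl : relation nat) : Prop :=
  exists d : ideal Rl -> ideal Rl -> R, is_metric d /\
    forall U : ideal Rl -> Prop,
      is_open Rl U <->
      (forall x, U x -> exists eps, 0 < eps /\ forall y, d x y < eps -> U y).

(* iota(n) is c.e. (overt): {k | [k] nonempty} is c.e. *)
Definition ce_space (n : nat) : Prop :=
  ce_set (fun k => exists x : ideal (iota_rel n), basic (iota_rel n) k x).

(* Kleene normal form presents F through a computable tree T_p: the finite
   sequences no prefix of which satisfies R(p, -), so that p is in F iff T_p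
   has no infinite branch.  Order the nodes of T_p by extension and put one
   extra element 0 above all of them.  An ideal containing 0 contains every
   number, so it is the full ideal.  An ideal avoiding 0 has, for each of its
   members, a strictly larger member; going up from the root this yields an
   infinite branch, and conversely the initial segments of a branch form an
   ideal avoiding 0.  Hence for p in F the space is a single point, while for
   p not in F a branch gives a point other than the full ideal whose every
   neighbourhood contains the full ideal, so the space is not T1.  The order is
   c.e. uniformly in p, and g is an s-m-n function for it. *)

From Stdlib Require Import Reals Relations Lia Lra Arith.
From Stdlib Require Import ClassicalEpsilon FunctionalExtensionality PropExtensionality ProofIrrelevance.
Open Scope nat_scope.

(** * Cantor pairing *)

Lemma pair_S0 b : pair (S b) 0 = S (pair 0 b).
Proof.
  unfold pair.
  replace ((S b + 0) * (S b + 0 + 1)) with (b * (b + 1) + (b + 1) * 2) by nia.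
  rewrite Nat.div_add by lia. replace (0 + b) with b by lia. lia.
Qed.

Lemma pair_aS a b : pair a (S b) = S (pair (S a) b).
Proof. unfold pair. replace (a + S b) with (S a + b) by lia. lia. Qed.

Fixpoint unpair (n : nat) : nat * nat :=
  match n with
  | 0 => (0, 0)
  | S m => let (a, b) := unpair m in
           match a with 0 => (S b, 0) | S a' => (a', S b) end
  end.

Lemma unpair_pair a b : unpair (pair a b) = (a, b).
Proof.
  remember (a + b) as n eqn:En. revert a b En.
  induction n as [n IHn] using lt_wf_ind. intros a b.
  revert a. induction b as [|b IHb]; intros a En.
  - destruct a as [|a]; [reflexivity|].
    rewrite pair_S0. simpl. rewrite (IHn a) by lia. reflexivity.
  - rewrite pair_aS. simpl. rewrite (IHb (S a)) by lia. reflexivity.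
Qed.

Lemma pair_inj a b c d : pair a b = pair c d -> a = c /\ b = d.
Proof.
  intro E. apply (f_equal unpair) in E. rewrite !unpair_pair in E.
  now injection E.
Qed.

Lemma pair_unpair n : pair (fst (unpair n)) (snd (unpair n)) = n.
Proof.
  induction n as [|n IH]; [reflexivity|].
  simpl. destruct (unpair n) as [[|a] b]; simpl in *.
  - now rewrite pair_S0, IH.
  - now rewrite pair_aS, IH.
Qed.

Definition unL x := fst (unpair x).
Definition unR x := snd (unpair x).

Lemma unL_pair a b : unL (pair a b) = a.
Proof. unfold unL. now rewrite unpair_pair. Qed.

Lemma unR_pair a b : unR (pair a b) = b.
Proof. unfold unR. now rewrite unpair_pair. Qed.

Lemma pair_surj x : exists a b, x = pair a b.
Proof. exists (unL x), (unR x). symmetry. apply pair_unpair. Qed.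

Lemma unR_le x : unR x <= x.
Proof.
  destruct (pair_surj x) as [a [b ->]]. rewrite unR_pair. unfold pair. lia.
Qed.

Ltac invert_pairs :=
  repeat match goal with
  | E : pair _ _ = pair _ _ |- _ => apply pair_inj in E as [? ?]; subst
  end.

(** * Codes *)

Lemma eval_det c x y : eval c x y -> forall y', eval c x y' -> y = y'.
Proof.
  induction 1 as [| | | | | f g x y z _ IHg _ IHf | | f g a n i z _ IHprev _ IHg
                 | f x n m _ IHn _ IHlt];
    intros y' H'; inversion H'; subst; invert_pairs; try discriminate; auto.
  - match goal with E : eval g x _ |- _ => apply IHg in E as <- end. auto.
  - match goal with E : S _ = S _ |- _ => injection E as -> end.
    match goal with E : eval (cPrec f g) _ _ |- _ => apply IHprev in E as <- end. auto.
  - match goal with E : eval f _ 0, L : forall i, i < y' -> _ |- _ =>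
      destruct (Nat.lt_trichotomy n y') as [Hl|[Hl|Hl]]; auto;
      [ apply L, IHn in Hl | apply (IHlt _ Hl) in E ]; discriminate end.
Qed.

Lemma encode_inj c c' : encode c = encode c' -> c = c'.
Proof.
  revert c'. induction c; destruct c'; simpl; intros E; try lia; auto.
  all: try (assert (P : pair (encode c1) (encode c2) = pair (encode c'1) (encode c'2)) by lia;
            apply pair_inj in P as [P1 P2]; f_equal; auto).
  f_equal. apply IHc. lia.
Qed.

Lemma phi_encode c x y : phi (encode c) x y <-> eval c x y.
Proof.
  split.
  - intros [c' [E H]]. now apply encode_inj in E as ->.
  - intros H. now exists c.
Qed.

Definition computes c (F : nat -> nat) := forall x, eval c x (F x).

Lemma computes_ext c F G : computes c F -> (forall x, F x = G x) -> computes c G.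
Proof. intros H E x. rewrite <- E. apply H. Qed.

Fixpoint prim (F G : nat -> nat) (a n : nat) : nat :=
  match n with 0 => F a | S m => G (pair a (pair m (prim F G a m))) end.

Definition cOp2 h f g := cComp h (cPair f g).
Definition cId := cPair cLeft cRight.

Fixpoint cConst n := match n with 0 => cZero | S k => cComp cSucc (cConst k) end.

Section BasicCodes.

Variables (f g h : code) (F G H : nat -> nat).
Hypotheses (HF : computes f F) (HG : computes g G) (HH : computes h H).

Lemma computes_zero : computes cZero (fun _ => 0).
Proof. intro; constructor. Qed.

Lemma computes_succ : computes cSucc S.
Proof. intro; constructor. Qed.

Lemma computes_left : computes cLeft unL.
Proof. intro x. destruct (pair_surj x) as [a [b ->]]. rewrite unL_pair. constructor. Qed.

Lemma computes_right : computes cRight unR.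
Proof. intro x. destruct (pair_surj x) as [a [b ->]]. rewrite unR_pair. constructor. Qed.

Lemma computes_pair : computes (cPair f g) (fun x => pair (F x) (G x)).
Proof. intro x. constructor; auto. Qed.

Lemma computes_comp : computes (cComp f g) (fun x => F (G x)).
Proof. intro x. econstructor; eauto. Qed.

Lemma computes_prec : computes (cPrec f g) (fun x => prim F G (unL x) (unR x)).
Proof.
  intro x. destruct (pair_surj x) as [a [n ->]]. rewrite unL_pair, unR_pair.
  induction n; simpl; econstructor; eauto.
Qed.

Lemma computes_op2 : computes (cOp2 h f g) (fun x => H (pair (F x) (G x))).
Proof. intro x. econstructor; [apply computes_pair|apply HH]. Qed.

End BasicCodes.

Lemma computes_id : computes cId (fun x => x).
Proof.
  eapply computes_ext; [apply computes_pair; [apply computes_left|apply computes_right]|].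
  intros. apply pair_unpair.
Qed.

Lemma computes_const n : computes (cConst n) (fun _ => n).
Proof. induction n; simpl; [apply computes_zero|apply (computes_comp _ _ S); auto using computes_succ]. Qed.

Global Hint Resolve computes_zero computes_succ computes_left computes_right computes_pair
  computes_comp computes_prec computes_op2 computes_id computes_const : computes.

Ltac simpl_pairs := repeat (first [rewrite unL_pair | rewrite unR_pair]).

Definition cAdd := cPrec cId (cComp cSucc (cComp cRight cRight)).

Lemma computes_add : computes cAdd (fun x => unL x + unR x).
Proof.
  eapply computes_ext; [unfold cAdd; eauto 10 with computes|].
  intro x. cbn beta. generalize (unL x) (unR x). intros a n. induction n; simpl; simpl_pairs; lia.
Qed.

Definition cPred := cComp (cPrec cZero (cComp cLeft cRight)) (cPair cZero cId).

Lemma computes_pred : computes cPred pred.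
Proof.
  eapply computes_ext; [unfold cPred; eauto 10 with computes|].
  intro x. cbn beta. simpl_pairs. destruct x; cbn [prim]; simpl_pairs; reflexivity.
Qed.

Global Hint Resolve computes_add computes_pred : computes.

Definition cSub := cPrec cId (cComp cPred (cComp cRight cRight)).

Lemma computes_sub : computes cSub (fun x => unL x - unR x).
Proof.
  eapply computes_ext; [unfold cSub; eauto 10 with computes|].
  intro x. cbn beta. generalize (unL x) (unR x). intros a n. induction n; simpl; simpl_pairs; lia.
Qed.

Definition cMul := cPrec cZero (cOp2 cAdd cLeft (cComp cRight cRight)).

Lemma computes_mul : computes cMul (fun x => unL x * unR x).
Proof.
  eapply computes_ext; [unfold cMul; eauto 10 with computes|].
  intro x. cbn beta. generalize (unL x) (unR x). intros a n. induction n; simpl; simpl_pairs; lia.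
Qed.

Global Hint Resolve computes_sub computes_mul : computes.

Definition cLin k := cOp2 cAdd (cOp2 cMul (cConst 4) cId) (cConst k).

Lemma computes_lin k : computes (cLin k) (fun x => 4 * x + k).
Proof.
  eapply computes_ext; [unfold cLin; eauto 10 with computes|].
  intro x. cbn beta. simpl_pairs. reflexivity.
Qed.

Global Hint Resolve computes_lin : computes.

Fixpoint quote c :=
  match c with
  | cZero => cZero
  | cSucc => cConst 1
  | cLeft => cConst 2
  | cRight => cConst 3
  | cPair f g => cComp (cLin 4) (cPair (quote f) (quote g))
  | cComp f g => cComp (cLin 5) (cPair (quote f) (quote g))
  | cPrec f g => cComp (cLin 6) (cPair (quote f) (quote g))
  | cMu f => cComp (cLin 7) (quote f)
  end.

Lemma computes_quote c : computes (quote c) (fun _ => encode c).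
Proof.
  induction c; simpl; eapply computes_ext; eauto 10 with computes;
    intros; cbn beta; simpl_pairs; reflexivity.
Qed.

Definition quote_const :=
  cComp (cPrec cZero (cComp (cLin 5) (cPair (cConst 1) (cComp cRight cRight)))) (cPair cZero cId).

Lemma computes_quote_const : computes quote_const (fun p => encode (cConst p)).
Proof.
  eapply computes_ext; [unfold quote_const; eauto 10 with computes|].
  intro p. cbn beta. simpl_pairs.
  induction p as [|p IH]; cbn [prim]; simpl_pairs; [reflexivity|].
  rewrite IH. reflexivity.
Qed.

Definition curry M p := cComp M (cPair (cConst p) cId).

Definition quote_curry M :=
  cComp (cLin 5) (cPair (quote M) (cComp (cLin 4) (cPair quote_const (quote cId)))).

Lemma computes_quote_curry M : computes (quote_curry M) (fun p => encode (curry M p)).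
Proof.
  pose proof (computes_quote M). pose proof (computes_quote cId). pose proof computes_quote_const.
  eapply computes_ext; [unfold quote_curry; eauto 10 with computes|].
  intro p. reflexivity.
Qed.

Lemma curry_halts M p x : (exists y, eval (curry M p) x y) <-> exists y, eval M (pair p x) y.
Proof.
  split.
  - intros [y H]. inversion H as [| | | | | ? ? ? u ? Hu HM | | |]; subst.
    inversion Hu as [| | | | ? ? ? a b Ha Hb | | | |]; subst.
    apply (eval_det _ _ _ (computes_const p x)) in Ha as ->.
    apply (eval_det _ _ _ (computes_id x)) in Hb as ->.
    eauto.
  - intros [y H]. exists y. econstructor; [|exact H].
    constructor; [apply computes_const|apply computes_id].
Qed.

(* The search variable of [cMu] is ignored, so the search stops at once or never. *)
Definition cZeroSet c := cMu (cComp c cLeft).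

Lemma zero_set_halts c F x : computes c F -> (exists y, eval (cZeroSet c) x y) <-> F x = 0.
Proof.
  intros Hc. assert (HcL : computes (cComp c cLeft) (fun z => F (unL z))) by eauto with computes.
  split.
  - intros [n Hn]. inversion Hn; subst.
    rewrite <- (unL_pair x n). eapply eval_det; [apply HcL|eassumption].
  - intros E. exists 0. apply (ev_mu _ _ _ (fun _ => 0)); [|intros; lia].
    rewrite <- E, <- (unL_pair x 0) at 2. apply HcL.
Qed.

Lemma W_encode c x : W (encode c) x <-> exists y, eval c x y.
Proof. unfold W. now setoid_rewrite phi_encode. Qed.

Lemma computable_pred_char (R : nat -> Prop) : computable_pred R ->
  exists c rf, computes c rf /\ forall x, R x <-> rf x = 0.
Proof.
  intros [e He].
  assert (exists c, encode c = e) as [c <-].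
  { destruct (classic (R 0)) as [H|H];
      [destruct (proj1 (He 0) H) as [c [E _]] | destruct (proj2 (He 0) H) as [c [E _]]]; eauto. }
  exists c, (fun x => if excluded_middle_informative (R x) then 0 else 1). split.
  - intro x. apply phi_encode.
    destruct (excluded_middle_informative (R x)); apply He; assumption.
  - intro x. destruct (excluded_middle_informative (R x)); split; congruence.
Qed.

(** * Ideal spaces *)

Section IdealSpaces.

Variables (Rl : relation nat) (t : nat).
Hypothesis top : forall k, Rl k t.

Lemma full_ideal_of_top : is_ideal Rl (fun _ => True).
Proof. repeat split; eauto. Qed.

Lemma ideal_subsingleton_of_top : (forall x : ideal Rl, proj1_sig x t) ->
  forall x y : ideal Rl, x = y.
Proof.
  intros Ht x y.
  assert (full : forall (z : ideal Rl) k, proj1_sig z k).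
  { intros z k. destruct (proj2_sig z) as [_ [Hlow _]]. eapply Hlow; [apply Ht|apply top]. }
  destruct x as [I HI], y as [J HJ].
  assert (I = J) as <-.
  { apply functional_extensionality. intro k. apply propositional_extensionality.
    split; intros _; [apply (full (exist _ J HJ))|apply (full (exist _ I HI))]. }
  f_equal. apply proof_irrelevance.
Qed.

Lemma not_T1_of_top (x : ideal Rl) : ~ proj1_sig x t -> ~ T1 Rl.
Proof.
  intros Hx HT1.
  set (full := exist (is_ideal Rl) _ full_ideal_of_top).
  destruct (HT1 x full) as [U [HU [Ux nUfull]]].
  { intros ->. apply Hx. exact I. }
  destruct (HU x Ux) as [ks [_ Hks]]. apply nUfull, Hks. intros. exact I.
Qed.

End IdealSpaces.

Lemma metrizable_of_subsingleton (Rl : relation nat) :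
  (forall x y : ideal Rl, x = y) -> metrizable Rl.
Proof.
  intros Hsub. exists (fun _ _ => 0%R). split.
  - repeat split; intros; auto; lra.
  - intros U. split.
    + intros _ x Ux. exists 1%R. split; [lra|]. intros y _. now rewrite (Hsub y x).
    + intros _ x Ux. exists nil. split; [intros _ []|]. intros y _. now rewrite (Hsub y x).
Qed.

Lemma ce_space_of_top n t : (forall k, iota_rel n k t) -> ce_space n.
Proof.
  intros top. exists (encode cZero). intro k. rewrite W_encode. split; intros _.
  - exists 0. constructor.
  - exists (exist _ _ (full_ideal_of_top _ _ top)). exact I.
Qed.

Lemma ideal_successor (Q : relation nat) (I : nat -> Prop) :
  is_ideal (clos_trans nat Q) I -> forall a, I a -> exists c, I c /\ Q a c.
Proof.
  intros [_ [Hlow Hdir]] a Ha.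
  destruct (Hdir a a Ha Ha) as [c [Hc [Hac _]]].
  apply clos_trans_t1n_iff in Hac. destruct Hac as [c Hac|a' c Haa' Ha'c]; eauto.
  exists a'. split; auto. eapply Hlow; [exact Hc|]. now apply clos_trans_t1n_iff.
Qed.

(** * The tree of a Pi^1_1 set *)

Lemma branch_of_extendable (P : nat -> Prop) :
  P 0 -> (forall s, P s -> exists x, P (S (pair x s))) -> exists f, forall n, P (init_code f n).
Proof.
  intros P0 Hext.
  destruct (choice (fun s x => P s -> P (S (pair x s)))) as [next Hnext].
  { intro s. destruct (classic (P s)) as [Hs|Hs].
    - destruct (Hext s Hs) as [x Hx]. eauto.
    - exists 0. tauto. }
  set (node := fix node n := match n with 0 => 0 | S m => S (pair (next (node m)) (node m)) end).
  exists (fun n => next (node n)).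
  assert (E : forall n, init_code (fun n => next (node n)) n = node n).
  { induction n as [|n IH]; [reflexivity|]. simpl. now rewrite IH. }
  intro n. rewrite E. induction n; simpl; auto.
Qed.

Section SequenceTree.

(* [A] is a set of codes of finite sequences, as in [init_code]; the node for
   the sequence coded by [s] is the number [S s], and [0] lies above all nodes. *)
Variable A : nat -> Prop.
Hypothesis A_prefix : forall x s, A (S (pair x s)) -> A s.

Definition tree_rel (i j : nat) : Prop :=
  j = 0 \/ exists x s, i = S s /\ j = S (S (pair x s)) /\ A (S (pair x s)).

Lemma tree_top k : clos_trans nat tree_rel k 0.
Proof. apply t_step. now left. Qed.

Section IdealAvoidingTop.

Variable I : nat -> Prop.
Hypotheses (HI : is_ideal (clos_trans nat tree_rel) I) (HI0 : ~ I 0).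

Lemma tree_ideal_successor a : I a ->
  exists x s, a = S s /\ I (S (S (pair x s))) /\ A (S (pair x s)).
Proof.
  intros Ha. destruct (ideal_successor _ _ HI a Ha) as [c [Hc [->|[x [s [-> [-> Hx]]]]]]].
  - contradiction.
  - eauto.
Qed.

Lemma tree_ideal_root : I 1.
Proof.
  destruct HI as [[a Ha] [Hlow _]].
  destruct (tree_ideal_successor a Ha) as [x [s [-> [_ Hs]]]]. apply A_prefix in Hs.
  clear x. revert Ha Hs. induction s as [s IH] using lt_wf_ind. intros Ha Hs.
  destruct s as [|t]; [exact Ha|].
  destruct (pair_surj t) as [x [s' ->]].
  assert (s' < S (pair x s')) by (pose proof (unR_le (pair x s')); rewrite unR_pair in *; lia).
  apply (IH s'); [assumption| |now apply A_prefix in Hs].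
  eapply Hlow; [exact Ha|]. apply t_step. right. eauto.
Qed.

End IdealAvoidingTop.

Lemma tree_ideal_top (I : nat -> Prop) : (forall f, exists n, ~ A (init_code f n)) ->
  is_ideal (clos_trans nat tree_rel) I -> I 0.
Proof.
  intros Hwf HI. apply NNPP. intro HI0.
  destruct (branch_of_extendable (fun s => I (S s))) as [f Hf].
  - exact (tree_ideal_root I HI HI0).
  - intros s Hs. destruct (tree_ideal_successor I HI HI0 _ Hs) as [x [s' [[= <-] [Hx _]]]]. eauto.
  - destruct (Hwf f) as [n Hn]. apply Hn.
    destruct (tree_ideal_successor I HI HI0 _ (Hf n)) as [x [s [[= ->] [_ Hs]]]]. eauto.
Qed.

Lemma branch_ideal (f : nat -> nat) : (forall n, A (init_code f n)) ->
  is_ideal (clos_trans nat tree_rel) (fun k => exists n, k = S (init_code f n)).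
Proof.
  intros Hf.
  assert (Hchain : forall n m, n < m ->
            clos_trans nat tree_rel (S (init_code f n)) (S (init_code f m))).
  { assert (Hstep : forall n, tree_rel (S (init_code f n)) (S (init_code f (S n)))).
    { intro n. right. exists (f n), (init_code f n). repeat split. apply (Hf (S n)). }
    intros n m Hnm. induction Hnm as [|m Hnm IH]; [apply t_step, Hstep|].
    eapply t_trans; [exact IH|apply t_step, Hstep]. }
  split; [|split].
  - exists 1, 0. reflexivity.
  - intros a b Hb Hab. revert Hb. induction Hab as [a b [->|[x [s [-> [-> _]]]]]|]; eauto.
    + intros [n Hn]. discriminate.
    + intros [[|n] Hn]; [discriminate|].
      injection Hn as Hn. apply pair_inj in Hn as [_ ->]. eauto.
  - intros a b [n ->] [m ->]. exists (S (init_code f (S (Nat.max n m)))).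
    split; [eauto|split; apply Hchain; lia].
Qed.

End SequenceTree.

Definition parent s := unR (pred s).

Lemma parent_snoc x s : parent (S (pair x s)) = s.
Proof. apply unR_pair. Qed.

Lemma iter_parent_0 k s : s <= k -> Nat.iter k parent s = 0.
Proof.
  revert s. induction k as [|k IH]; intros s Hs; [simpl; lia|].
  rewrite Nat.iter_succ_r. apply IH.
  pose proof (unR_le (pred s)). unfold parent. lia.
Qed.

Lemma iter_parent_init_code f k n : Nat.iter k parent (init_code f n) = init_code f (n - k).
Proof.
  revert n. induction k as [|k IH]; intros n; [simpl; f_equal; lia|].
  destruct n as [|n]; [apply iter_parent_0; simpl; lia|].
  rewrite Nat.iter_succ_r. simpl init_code. rewrite parent_snoc, IH. reflexivity.
Qed.

Section AliveNodes.

Variables (rf : nat -> nat) (p : nat).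

Definition alive s := forall k, rf (pair p (Nat.iter k parent s)) <> 0.

Lemma alive_prefix x s : alive (S (pair x s)) -> alive s.
Proof. intros H k. rewrite <- (parent_snoc x s), <- Nat.iter_succ_r. apply H. Qed.

Lemma alive_init_code f : (forall n, rf (pair p (init_code f n)) <> 0) ->
  forall n, alive (init_code f n).
Proof. intros Hf n k. cbn beta. rewrite iter_parent_init_code. apply Hf. Qed.

Fixpoint dead_count s n :=
  match n with
  | 0 => 0
  | S m => dead_count s m + (1 - rf (pair p (Nat.iter m parent s)))
  end.

Lemma dead_count_eq0 s n :
  dead_count s n = 0 <-> forall k, k < n -> rf (pair p (Nat.iter k parent s)) <> 0.
Proof.
  induction n as [|n IH]; cbn [dead_count]; [split; intros; lia|].
  split.
  - intros H k Hk. destruct (Nat.eq_dec k n) as [->|Hne]; [lia|].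
    apply IH; lia.
  - intros H. assert (dead_count s n = 0) by (apply IH; auto). specialize (H n). lia.
Qed.

Lemma alive_dead_count s : alive s <-> dead_count s (S s) = 0.
Proof.
  rewrite dead_count_eq0. split; intros H k; auto.
  destruct (Nat.le_gt_cases k s); [apply H; lia|].
  replace (Nat.iter k parent s) with (Nat.iter s parent s) by (rewrite !iter_parent_0; lia).
  apply H. lia.
Qed.

End AliveNodes.

Definition tree_test rf z :=
  let p := unL z in let i := unL (unR z) in let j := unR (unR z) in
  j * ((2 - j) + ((i - S (parent (pred j))) + (S (parent (pred j)) - i))
       + dead_count rf p (pred j) (S (pred j))).

Lemma tree_test_eq0 rf p i j : tree_test rf (pair p (pair i j)) = 0 <-> tree_rel (alive rf p) i j.
Proof.
  unfold tree_test. simpl_pairs. unfold tree_rel.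
  destruct j as [|[|t]].
  - split; auto.
  - split; [cbn; lia|]. intros [E|[x [s [_ [E _]]]]]; discriminate.
  - destruct (pair_surj t) as [x [s ->]]. cbn [pred]. rewrite parent_snoc.
    split.
    + intros H. right. exists x, s.
      assert (i = S s) as -> by nia. repeat split. apply alive_dead_count. nia.
    + intros [E|[x' [s' [-> [E Ha]]]]]; [discriminate|].
      injection E as E. apply pair_inj in E as [<- <-].
      apply alive_dead_count in Ha. rewrite Ha. lia.
Qed.

Definition cParent := cComp cRight cPred.

Lemma computes_parent : computes cParent parent.
Proof. exact (computes_comp _ _ _ _ computes_right computes_pred). Qed.

Global Hint Resolve computes_parent : computes.

Definition cIterParent := cPrec cId (cComp cParent (cComp cRight cRight)).

Lemma computes_iter_parent : computes cIterParent (fun x => Nat.iter (unR x) parent (unL x)).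
Proof.
  eapply computes_ext; [unfold cIterParent; eauto 10 with computes|].
  intro x. cbn beta. generalize (unL x) (unR x). intros a n.
  induction n as [|n IH]; cbn [prim]; simpl_pairs; [reflexivity|]. now rewrite IH.
Qed.

Global Hint Resolve computes_iter_parent : computes.

Definition cDeadCount cR :=
  cPrec cZero (cOp2 cAdd (cComp cRight cRight)
    (cOp2 cSub (cConst 1) (cComp cR (cPair (cComp cLeft cLeft)
      (cOp2 cIterParent (cComp cRight cLeft) (cComp cLeft cRight)))))).

Lemma computes_dead_count cR rf : computes cR rf ->
  computes (cDeadCount cR) (fun x => dead_count rf (unL (unL x)) (unR (unL x)) (unR x)).
Proof.
  intros HcR.
  eapply computes_ext; [unfold cDeadCount; eauto 15 with computes|].
  intro x. cbn beta. generalize (unL x) (unR x). intros a n.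
  induction n as [|n IH]; cbn [prim dead_count]; simpl_pairs; [reflexivity|]. now rewrite IH.
Qed.

Definition cTreeTest cR :=
  let j := cComp cRight cRight in
  let i := cComp cLeft cRight in
  let s := cComp cPred j in
  let par := cComp cSucc (cComp cParent s) in
  cOp2 cMul j (cOp2 cAdd
    (cOp2 cAdd (cOp2 cSub (cConst 2) j) (cOp2 cAdd (cOp2 cSub i par) (cOp2 cSub par i)))
    (cOp2 (cDeadCount cR) (cPair cLeft s) (cComp cSucc s))).

Lemma computes_tree_test cR rf : computes cR rf -> computes (cTreeTest cR) (tree_test rf).
Proof.
  intros HcR. pose proof (computes_dead_count cR rf HcR).
  eapply computes_ext; [unfold cTreeTest; cbn zeta; eauto 40 with computes|].
  intro z. unfold tree_test. cbn beta. simpl_pairs. reflexivity.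
Qed.

Definition tree_code cR := cZeroSet (cTreeTest cR).

Lemma iota_rel_tree_code cR rf p : computes cR rf ->
  iota_rel (encode (curry (tree_code cR) p)) = clos_trans nat (tree_rel (alive rf p)).
Proof.
  intros HcR. unfold iota_rel. f_equal.
  apply functional_extensionality. intro i. apply functional_extensionality. intro j.
  apply propositional_extensionality.
  unfold V. rewrite W_encode, curry_halts, <- tree_test_eq0.
  apply zero_set_halts, computes_tree_test, HcR.
Qed.

Theorem theorem25 (F : nat -> Prop) (HF : Pi11 F) :
  exists g : nat -> nat, computable_fun g /\
    forall p : nat,
      ce_space (g p) /\
      (F p -> metrizable (iota_rel (g p))) /\
      (~ F p -> ~ T1 (iota_rel (g p))).
Proof.
  destruct HF as [R [HR HFR]].
  destruct (computable_pred_char R HR) as [cR [rf [HcR Hrf]]].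
  exists (fun p => encode (curry (tree_code cR) p)). split.
  { exists (encode (quote_curry (tree_code cR))). intro p.
    apply phi_encode, computes_quote_curry. }
  intro p. pose proof (iota_rel_tree_code cR rf p HcR) as E.
  split; [|split].
  - apply (ce_space_of_top _ 0). rewrite E. apply tree_top.
  - intros Fp. rewrite E.
    apply metrizable_of_subsingleton, (ideal_subsingleton_of_top _ 0 (tree_top _)).
    intro x. apply (tree_ideal_top _ (alive_prefix rf p)); [|exact (proj2_sig x)].
    intro f. destruct (proj1 (HFR p) Fp f) as [n Hn].
    exists n. intro Halive. apply (Halive 0), Hrf, Hn.
  - intros nFp. rewrite E.
    assert (exists f, forall n, ~ R (pair p (init_code f n))) as [f Hf].
    { apply NNPP. intros Hnone. apply nFp, HFR. intro f.
      apply not_all_not_ex. intros Hf. apply Hnone. now exists f. }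
    assert (Hbranch : forall n, alive rf p (init_code f n)).
    { apply alive_init_code. intros n Hn. apply (Hf n), Hrf, Hn. }
    apply (not_T1_of_top _ 0 (tree_top _) (exist _ _ (branch_ideal _ f Hbranch))).
    intros [n Hn]. discriminate.
Qed.
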